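(* For every $k\in\mathbb{N}$, every $v\in V^X$ and every $i\in\Pi$, $\sup\{\mathrm{Cost}_i(\rho)\mid\rho\in\Lambda^k(v)\}=\max\{\mathrm{Cost}_i(\rho)\mid\rho\in\Lambda^k(v)\}$, where the maximum is taken in $\mathbb{N}\cup\{+\infty\}$ (i.e., the supremum is attained).
   Context: Let $\mathcal{G}$ be a quantitative reachability game on an arena $G=(\Pi,V,(V_i)_{i\in\Pi},E)$ (finite player set $\Pi$, finite vertex set $V$ with $|V|\ge2$, $|\Pi|\le|V|$, partition $(V_i)$, every vertex has a successor) with targets $F_i\subseteq V$ and costs $\mathrm{Cost}_i(\rho)=$ least $k$ with $\rho_k\in F_i$ (or $+\infty$); $v_0\in V$. Extended game: arena $X$ with vertices $V^X=V\times2^\Pi$, edges $((v,I),(v',I'))\in E^X$ iff $(v,v')\in E$ and $I'=I\cup\{i:v'\in F_i\}$, $(v,I)\in V^X_i$ iff $v\in V_i$, targets $F^X_i=\{(v,I):i\in I\}$ with corresponding reachability costs $\mathrm{Cost}_i$; $x_0=(v_0,\{i:v_0\in F_i\})$; $I(u)$ is the second component. $\mathcal{I}$ is the set of $I$ with some $(v,I)$ reachable from $x_0$, $N=|\mathcal{I}|$, $J_1<\dots<J_N$ a fixed total order of $\mathcal{I}$ extending $I<I'$ iff $I\ne I'$ and some $(v',I')$ is reachable from some $(v,I)$. $V^{\ge J_n}=\{(v,J_m):v\in V,m\ge n\}$. Labelings: for $\lambda:V^X\to\mathbb{N}\cup\{+\infty\}$, a play $\rho$ of $X$ is $\lambda$-consistent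 if $\mathrm{Cost}_i(\rho_{\ge n})\le\lambda(\rho_n)$ whenever $\rho_n\in V^X_i$. $\lambda^0(u)=0$ if $u\in V^X_i$ and $i\in I(u)$, else $+\infty$. The update of $\lambda^k$ w.r.t. $V^{\ge J_n}$ keeps values outside $V^{\ge J_n}$ and for $u\in V^{\ge J_n}\cap V^X_i$ sets $\lambda^{k+1}(u)=0$ if $i\in I(u)$, otherwise $1+\min_{(u,u')\in E^X}\sup\{\mathrm{Cost}_i(\rho):\rho\in\Lambda^k(u')\}$ ($1+(+\infty)=+\infty$). The sequence is generated by $n_0=N$, $\lambda^{k+1}=$ update of $\lambda^k$ w.r.t. $V^{\ge J_{n_k}}$, $n_{k+1}=n_k-1$ if $\lambda^{k+1}=\lambda^k$ and $n_k>1$, else $n_{k+1}=n_k$. $\Lambda^k(v)$ is the set of $\lambda^k$-consistent plays from $v$. *)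

From Stdlib Require Import ClassicalEpsilon.
From mathcomp Require Import all_boot.
Set Implicit Arguments. Unset Strict Implicit. Unset Printing Implicit Defensive.

(* N u {+oo}: Some n = n, None = +oo. *)
Definition enat := option nat.

Definition ele (x y : enat) : bool :=
  match y, x with
  | None, _ => true
  | Some _, None => false
  | Some m, Some n => n <= m
  end.

Definition emin (x y : enat) : enat := if ele x y then x else y.

Definition esucc (x : enat) : enat := omap S x.

Definition is_esup (P : enat -> Prop) (s : enat) : Prop :=
  (forall x, P x -> ele x s) /\ (forall b, (forall x, P x -> ele x b) -> ele s b).

(* the supremum (it always exists in N u {+oo}; chosen by epsilon) *)
Definition esup (P : enat -> Prop) : enat := epsilon (inhabits None) (is_esup P).

Section Game.
Variables (Pi V : finType) (owner : V -> Pi) (E : rel V) (F : Pi -> {set V}).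

Definition VX := (V * {set Pi})%type.

Definition EX : rel VX := fun u u' =>
  E u.1 u'.1 && (u'.2 == u.2 :|: [set i | u'.1 \in F i]).

Definition ownerX (u : VX) : Pi := owner u.1.

Definition FX (i : Pi) : {set VX} := [set u : VX | i \in u.2].

Definition x0 (v0 : V) : VX := (v0, [set i | v0 \in F i]).

Definition playX (rho : nat -> VX) : Prop := forall n, EX (rho n) (rho n.+1).

Definition suffix (rho : nat -> VX) (n : nat) : nat -> VX := fun k => rho (n + k).

Definition cost (i : Pi) (rho : nat -> VX) : enat :=
  match excluded_middle_informative (exists k, (fun k => rho k \in FX i) k) with
  | left h => Some (ex_minn h)
  | right _ => None
  end.

Definition consistent (lam : {ffun VX -> enat}) (rho : nat -> VX) : Prop :=
  forall n i, ownerX (rho n) = i -> ele (cost i (suffix rho n)) (lam (rho n)).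

Definition Lam (lam : {ffun VX -> enat}) (u : VX) (rho : nat -> VX) : Prop :=
  playX rho /\ rho 0 = u /\ consistent lam rho.

Definition lam0 : {ffun VX -> enat} :=
  [ffun u => if ownerX u \in u.2 then Some 0 else None].

(* J = [:: J_1; ...; J_N] ; V^{>= J_n} = {(v, J_m) | m >= n} *)
Definition VgeJ (J : seq {set Pi}) (n : nat) (u : VX) : bool := u.2 \in drop n.-1 J.

Definition update (J : seq {set Pi}) (lam : {ffun VX -> enat}) (n : nat)
  : {ffun VX -> enat} :=
  [ffun u => if VgeJ J n u then
               (if ownerX u \in u.2 then Some 0
                else esucc (\big[emin/None]_(u' | EX u u')
                      esup (fun c => exists rho, Lam lam u' rho /\ c = cost (ownerX u) rho)))
             else lam u].

Fixpoint lamseq (J : seq {set Pi}) (k : nat) : {ffun VX -> enat} * nat :=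
  match k with
  | 0 => (lam0, size J)
  | k'.+1 =>
      let: (l, n) := lamseq J k' in
      let l' := update J l n in
      (l', if (l' == l) && (1 < n) then n.-1 else n)
  end.

Definition lamk (J : seq {set Pi}) (k : nat) : {ffun VX -> enat} := (lamseq J k).1.

(* J is a total order J_1 < ... < J_N of the reachable sets I, extending reachability *)
Definition valid_order (v0 : V) (J : seq {set Pi}) : Prop :=
  [/\ uniq J,
      (forall I, I \in J <-> exists v, connect EX (x0 v0) (v, I)) &
      (forall u u', u.2 \in J -> u'.2 \in J -> u.2 != u'.2 -> connect EX u u' ->
                    index u.2 J < index u'.2 J)].

End Game.

From Pilot Require Import Defs.
From Stdlib Require Import ClassicalEpsilon Classical.
From mathcomp Require Import all_boot.
Set Implicit Arguments. Unset Strict Implicit. Unset Printing Implicit Defensive.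

(* Two facts combine.  First, every Lambda^k(v) is nonempty.  Let each owner
   move to a successor minimising its own cost in the finite-horizon play that
   continues in the same way (backward induction).  By Koenig's lemma these
   plays have limits as the horizon grows, and a limit play from u admits no
   profitable one-shot deviation: if its cost for the owner of u is at least
   c+1, then every successor u' starts a limit play whose cost for that player
   is at least c.  So the owner's cost along limit plays is bounded by lambda^0
   and, inductively, by every update of a labeling bounding it; limit plays are
   therefore lambda^k-consistent.
   Second, lambda-consistency and "cost >= c" are closed conditions on plays:
   a finite constraint lambda(rho_n) = m only involves rho_0, ..., rho_(n+m).
   If the costs in Lambda^k(v) are bounded, their supremum is a maximum of
   naturals; otherwise Koenig's lemma yields a consistent play of infinite
   cost. *)

Lemma ele_None x : ele x None. Proof. by case: x. Qed.

Lemma ele_trans x y z : ele x y -> ele y z -> ele x z.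
Proof.
by case: z => [c|] //; case: y => [b|] //; case: x => [a|] //=; apply: leq_trans.
Qed.

Lemma ele_Some_all x : (forall c, ele (Some c) x) -> x = None.
Proof. by case: x => // n /(_ n.+1); rewrite /= ltnn. Qed.

Lemma ele_esucc x y : (forall c, ele (Some c.+1) x -> ele (Some c) y) -> ele x (esucc y).
Proof.
case: x => [[|n]|] ge; first by case: y ge.
- by move: (ge n (leqnn _)); clear ge; case: y.
- by rewrite (ele_Some_all (fun c => ge c isT)).
Qed.

Lemma ele_min_exists (T : finType) (P : pred T) (g : T -> enat) :
  (exists x, P x) -> exists x, P x && [forall y, P y ==> ele (g x) (g y)].
Proof.
move=> [x0 Px0].
have [fin|all_inf] := boolP [exists x, P x && (g x != None)].
- have ex_n : exists n, [exists x, P x && (g x == Some n)].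
    case/existsP: fin => x /andP[Px]; case gx: (g x) => [n|] // _.
    by exists n; apply/existsP; exists x; rewrite Px gx eqxx.
  case: (ex_minnP ex_n) => n /existsP[x /andP[Px /eqP gx]] n_min.
  exists x; rewrite Px gx; apply/forallP=> y; apply/implyP=> Py.
  case gy: (g y) => [m|] //=; apply: n_min.
  by apply/existsP; exists y; rewrite Py gy eqxx.
- have gNone z : P z -> g z = None.
    move=> Pz; apply/eqP; apply: contraNT all_inf => gz.
    by apply/existsP; exists z; rewrite Pz.
  exists x0; rewrite Px0; apply/forallP=> y; apply/implyP=> Py.
  by rewrite !gNone.
Qed.

Lemma esup_exists (P : enat -> Prop) : exists s, is_esup P s.
Proof.
have [[m]|unbounded] := classic (exists m, forall x, P x -> ele x (Some m)).
- elim: m => [|m IH] ub_m.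
    by exists (Some 0); split=> // [[]].
  have [ub_m'|not_ub] := classic (forall x, P x -> ele x (Some m)); first exact: IH.
  exists (Some m.+1); split=> // [[n|]] ub_n //=.
  rewrite ltnNge; apply/negP=> le_nm; apply: not_ub => x Px.
  exact: ele_trans (ub_n x Px) _.
- exists None; split=> [x _|[m|] ub //]; first exact: ele_None.
  by case: unbounded; exists m.
Qed.

Lemma esup_spec P : is_esup P (esup P).
Proof. exact: epsilon_spec (esup_exists P). Qed.

Lemma esup_ub P x : P x -> ele x (esup P).
Proof. by case: (esup_spec P) => ub _; apply: ub. Qed.

Lemma esup_least P b : (forall x, P x -> ele x b) -> ele (esup P) b.
Proof. by case: (esup_spec P) => _; apply. Qed.

Lemma esup_Some_mem P m : (exists x, P x) -> esup P = Some m -> P (Some m).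
Proof.
move=> [x0 Px0] sup_m; apply: NNPP => notPm.
have below x : P x -> if x is Some n then n < m else false.
  move=> Px; have := esup_ub Px; rewrite sup_m.
  case: x Px => [n|] Px //=; rewrite leq_eqVlt => /orP[/eqP n_m|//].
  by case: notPm; rewrite -n_m.
have m_gt0 : 0 < m.
  by move: (below x0 Px0); case: x0 {Px0} => // n; apply: leq_ltn_trans.
suff: ele (esup P) (Some m.-1) by rewrite sup_m /= leqNgt ltn_predL m_gt0.
apply: esup_least => x Px; move: (below x Px); case: x {Px} => // n /=.
by move=> lt_nm; rewrite -ltnS (prednK m_gt0).
Qed.

Lemma esup_None_unbounded P c : esup P = None -> exists2 x, P x & ele (Some c) x.
Proof.
move=> sup_None; apply: NNPP => none.
suff: ele (esup P) (Some c) by rewrite sup_None.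
apply: esup_least => x Px.
case: x Px => [n|] Px /=; last by case: none; exists None.
rewrite ltnW // ltnNge; apply/negP=> le_cn.
by apply: none; exists (Some n).
Qed.

Definition agree (T : Type) (N : nat) (f g : nat -> T) := forall k, k < N -> f k = g k.

Lemma agree_sym (T : Type) N (f g : nat -> T) : agree N f g -> agree N g f.
Proof. by move=> ag k /ag. Qed.

Section Konig.
Variables (T : finType) (B : nat -> (nat -> T) -> Prop).
Hypothesis B_antitone : forall M M' f, M <= M' -> B M' f -> B M f.
Hypothesis B_nonempty : forall M, exists f, B M f.

Let extendable (g : nat -> T) N := forall M, exists2 f, B M f & agree N g f.
Let set_at (g : nat -> T) N t k := if k == N then t else g k.

Let extendable_step g N : extendable g N -> exists t, extendable (set_at g N t) N.+1.
Proof.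
move=> ext_g; apply: NNPP => stuck.
have bad t : exists Mt, forall f, B Mt f -> ~ agree N.+1 (set_at g N t) f.
  have /not_all_ex_not[Mt no_f] : ~ extendable (set_at g N t) N.+1.
    by move=> ext; apply: stuck; exists t.
  by exists Mt => f Bf ag; apply: no_f; exists f.
have [Mt Mt_bad] := fin_all_exists bad.
have [f Bf ag] := ext_g (\max_t Mt t).
apply: (Mt_bad (f N) f); first exact: B_antitone (leq_bigmax _) Bf.
move=> k; rewrite ltnS leq_eqVlt /set_at => /orP[/eqP->|lt_kN]; first by rewrite eqxx.
by rewrite (ltn_eqF lt_kN) ag.
Qed.

Lemma konig : exists rho : nat -> T, forall N M, exists2 f, B M f & agree N rho f.
Proof.
have [f0 _] := B_nonempty 0.
pose next g N := epsilon (inhabits (f0 0)) (fun t => extendable (set_at g N t) N.+1).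
pose fix G N := if N is N'.+1 then set_at (G N') N' (next (G N') N') else f0.
have G_ext N : extendable (G N) N.
  elim: N => [M|N IH]; first by have [f Bf] := B_nonempty M; exists f.
  exact: epsilon_spec (extendable_step IH).
have G_stable N k : k < N -> G N k = G k.+1 k.
  elim: N => [//|N IH]; rewrite ltnS leq_eqVlt => /orP[/eqP->//|lt_kN] /=.
  by rewrite /set_at (ltn_eqF lt_kN) IH.
exists (fun n => G n.+1 n) => N M.
have [f Bf ag] := G_ext N M; exists f => // k lt_kN.
by rewrite -ag // G_stable.
Qed.

End Konig.

Definition cluster (T : Type) (s : nat -> nat -> T) (rho : nat -> T) :=
  forall N M, exists2 r, M <= r & agree N rho (s r).

Lemma cluster_exists (T : finType) (s : nat -> nat -> T) (Q : (nat -> T) -> Prop) :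
  (forall M, exists2 r, M <= r & Q (s r)) ->
  exists rho, forall N M, exists r, [/\ M <= r, Q (s r) & agree N rho (s r)].
Proof.
move=> Q_often.
have [|M|rho rhoP] := @konig T (fun M f => exists r, [/\ M <= r, Q (s r) & f = s r]).
- move=> M M' f le_MM' [r [le_M'r Qr ->]].
  by exists r; split=> //; apply: leq_trans le_M'r.
- by have [r le_Mr Qr] := Q_often M; exists (s r), r.
exists rho => N M; have [f [r [le_Mr Qr ->]] ag] := rhoP N M.
by exists r.
Qed.

Definition scons (T : Type) (x : T) (rho : nat -> T) (n : nat) : T :=
  if n is n'.+1 then rho n' else x.

Section Cost.
Variables (Pi V : finType).
Implicit Types (rho : nat -> VX Pi V) (i : Pi).

Lemma cost_geP i rho c :
  ele (Some c) (cost i rho) <-> forall k, k < c -> rho k \notin FX V i.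
Proof.
rewrite /cost; case: excluded_middle_informative => [hit|no_hit].
- case: ex_minnP => m rho_m m_min /=; split.
  + move=> le_cm k lt_kc; apply: contraTN lt_kc => /m_min le_mk.
    by rewrite -leqNgt (leq_trans le_cm).
  + by move=> miss; rewrite leqNgt; apply: contraL rho_m => /miss.
- by split=> // _ k _; apply/negP=> rho_k; apply: no_hit; exists k.
Qed.

Lemma cost_leP i rho m :
  ele (cost i rho) (Some m) <-> exists2 k, k <= m & rho k \in FX V i.
Proof.
rewrite /cost; case: excluded_middle_informative => [hit|no_hit].
- case: ex_minnP => n rho_n n_min /=; split; first by exists n.
  by case=> k le_km /n_min le_nk; apply: leq_trans le_km.
- by split=> // [[k _ rho_k]]; case: no_hit; exists k.
Qed.

Lemma agree_cost_ge i rho rho' c :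
  agree c rho rho' -> ele (Some c) (cost i rho) -> ele (Some c) (cost i rho').
Proof.
move=> ag /cost_geP miss; apply/cost_geP => k lt_kc.
by rewrite -ag //; apply: miss.
Qed.

Lemma agree_cost_le i rho rho' m :
  agree m.+1 rho rho' -> ele (cost i rho) (Some m) -> ele (cost i rho') (Some m).
Proof.
move=> ag /cost_leP[k le_km rho_k]; apply/cost_leP; exists k => //.
by rewrite -ag.
Qed.

Lemma cost_scons_ge i u rho c :
  ele (Some c.+1) (cost i (scons u rho)) -> ele (Some c) (cost i rho).
Proof. by move/cost_geP=> miss; apply/cost_geP => k lt_kc; apply: (miss k.+1). Qed.

Lemma agree_suffix N n rho rho' :
  agree (n + N) rho rho' -> agree N (Defs.suffix rho n) (Defs.suffix rho' n).
Proof. by move=> ag k lt_kN; apply: ag; rewrite ltn_add2l. Qed.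

End Cost.

Section Consistency.
Variables (Pi V : finType) (owner : V -> Pi) (E : rel V) (F : Pi -> {set V}).
Local Notation Lam := (Lam owner E F).

Lemma Lam_closed lam u rho :
  (forall N, exists2 f, Lam lam u f & agree N rho f) -> Lam lam u rho.
Proof.
move=> approx; split; [|split].
- move=> n; have [f [f_play _] ag] := approx n.+2.
  by rewrite !ag //; apply: f_play.
- by have [f [_ [f0 _]] ag] := approx 1; rewrite ag.
- move=> n i own_i; case lam_n: (lam (rho n)) => [m|]; last exact: ele_None.
  have [f [_ [_ f_cons]] ag] := approx (n + m.+1).
  have f_n : f n = rho n by rewrite ag // -addn1 leq_add2l.
  apply: agree_cost_le (agree_suffix (agree_sym ag)) _.
  by rewrite -lam_n -f_n; apply: f_cons; rewrite f_n.
Qed.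

Lemma Lam_sup_attained lam v i :
  (exists rho, Lam lam v rho) ->
  exists rho, Lam lam v rho /\
    cost i rho = esup (fun c => exists rho', Lam lam v rho' /\ c = cost i rho').
Proof.
move=> [rho0 L0]; set S := (fun c : enat => _).
have S_ne : exists c, S c by exists (cost i rho0), rho0.
case sup: (esup S) => [m|].
  by have [rho [L ->]] := esup_Some_mem S_ne sup; exists rho.
have [|M|rho rhoP] := @konig _ (fun M f => Lam lam v f /\ ele (Some M) (cost i f)).
- by move=> M M' f le_MM' [L ge]; split=> //; apply: ele_trans ge.
- by have [_ [f [L ->]] ge] := esup_None_unbounded M sup; exists f.
exists rho; split.
  by apply: Lam_closed => N; have [f [L _] ag] := rhoP N 0; exists f.
apply: ele_Some_all => c; have [f [_ ge] ag] := rhoP c c.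
exact: agree_cost_ge (agree_sym ag) ge.
Qed.

End Consistency.

Section HorizonPlays.
Variables (Pi V : finType) (owner : V -> Pi) (E : rel V) (F : Pi -> {set V}).
Hypothesis E_total : forall v, exists v', E v v'.
Local Notation VX := (VX Pi V).
Local Notation EX := (EX E F).
Local Notation own := (ownerX owner).

Lemma EX_total (u : VX) : exists u', EX u u'.
Proof.
have [v' Ev'] := E_total u.1.
by exists (v', u.2 :|: [set i | v' \in F i]); rewrite /EX /= Ev' eqxx.
Qed.

Definition best_succ (g : VX -> enat) (u : VX) : VX :=
  odflt u [pick u' | EX u u' & [forall u'', EX u u'' ==> ele (g u') (g u'')]].

Lemma best_succP g u :
  EX u (best_succ g u) /\ forall u', EX u u' -> ele (g (best_succ g u)) (g u').
Proof.
rewrite /best_succ; case: pickP => [u' /andP[EXu' /forallP min_u']|none] /=.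
  by split=> // u'' /(implyP (min_u' u'')).
have [u' min_u'] := ele_min_exists g (EX_total u).
by move: (none u'); rewrite min_u'.
Qed.

Fixpoint horizon_play (r : nat) (u : VX) : nat -> VX :=
  if r is r'.+1 then
    scons u (horizon_play r' (best_succ (fun u' => cost (own u) (horizon_play r' u')) u))
  else fun=> u.

Definition next_move (r : nat) (u : VX) : VX :=
  best_succ (fun u' => cost (own u) (horizon_play r u')) u.

Lemma horizon_playS r u : horizon_play r.+1 u = scons u (horizon_play r (next_move r u)).
Proof. by []. Qed.

Lemma horizon_play0 r u : horizon_play r u 0 = u.
Proof. by case: r. Qed.

Lemma horizon_play_edge r u n : n < r -> EX (horizon_play r u n) (horizon_play r u n.+1).
Proof.
elim: r u n => [//|r IH] u [|n] lt_nr; rewrite horizon_playS /=.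
- rewrite horizon_play0.
  by case: (best_succP (fun u' => cost (own u) (horizon_play r u')) u).
- exact: IH.
Qed.

Lemma horizon_play_no_deviation r u u' c : EX u u' ->
  ele (Some c.+1) (cost (own u) (horizon_play r.+1 u)) ->
  ele (Some c) (cost (own u) (horizon_play r u')).
Proof.
move=> EXu' /cost_scons_ge ge_c.
have [_ best] := best_succP (fun u' => cost (own u) (horizon_play r u')) u.
exact: ele_trans ge_c (best u' EXu').
Qed.

Definition horizon_limit (u : VX) : (nat -> VX) -> Prop := cluster (horizon_play^~ u).

Lemma horizon_limit_exists u : exists rho, horizon_limit u rho.
Proof.
have [|rho rhoP] := @cluster_exists _ (horizon_play^~ u) (fun=> True).
  by move=> M; exists M.
by exists rho => N M; have [r [le_Mr _ ag]] := rhoP N M; exists r.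
Qed.

Lemma horizon_limit_start u rho : horizon_limit u rho -> rho 0 = u.
Proof. by move=> lim; have [r _ ag] := lim 1 0; rewrite ag // horizon_play0. Qed.

Lemma horizon_limit_play u rho : horizon_limit u rho -> playX E F rho.
Proof.
move=> lim n; have [r lt_nr ag] := lim n.+2 n.+1.
by rewrite !ag //; apply: horizon_play_edge.
Qed.

Lemma horizon_limit_tail u rho rho' :
  horizon_limit u rho -> (forall k, rho' k = rho k.+1) -> horizon_limit (rho 1) rho'.
Proof.
move=> lim tail N M; have [[|r] //= le_Mr ag] := lim N.+2 M.+1.
have rho1 : rho 1 = next_move r u by rewrite ag //= horizon_play0.
by exists r => // k lt_kN; rewrite tail rho1 ag // ltnW.
Qed.

Lemma horizon_limit_suffix u rho n :
  horizon_limit u rho -> horizon_limit (rho n) (Defs.suffix rho n).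
Proof.
move=> lim; elim: n => [|n IH].
  move=> N M; have [r le_Mr ag] := lim N M.
  by exists r => // k lt_kN; rewrite /Defs.suffix add0n ag // (horizon_limit_start lim).
have := horizon_limit_tail (rho' := Defs.suffix rho n.+1) IH.
by rewrite /Defs.suffix addn1; apply=> k; rewrite addnS.
Qed.

Lemma horizon_limit_no_deviation u rho u' c : horizon_limit u rho -> EX u u' ->
  ele (Some c.+1) (cost (own u) rho) ->
  exists2 pi, horizon_limit u' pi & ele (Some c) (cost (own u) pi).
Proof.
move=> lim EXu' ge_c.
have [M|pi piP] := @cluster_exists _ (horizon_play^~ u')
                                    (fun f => ele (Some c) (cost (own u) f)).
  have [[|r] //= le_Mr ag] := lim c.+1 M.+1.
  exists r => //; apply: horizon_play_no_deviation EXu' _.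
  exact: agree_cost_ge ag ge_c.
exists pi; first by move=> N M; have [r [le_Mr _ ag]] := piP N M; exists r.
have [r [_ ge_r ag]] := piP c 0.
exact: agree_cost_ge (agree_sym ag) ge_r.
Qed.

Definition bounds_horizon_limits (lam : {ffun VX -> enat}) :=
  forall u rho, horizon_limit u rho -> ele (cost (own u) rho) (lam u).

Lemma horizon_limit_consistent lam u rho :
  bounds_horizon_limits lam -> horizon_limit u rho -> Lam owner E F lam u rho.
Proof.
move=> bnd lim; split; first exact: horizon_limit_play lim.
split; first exact: horizon_limit_start lim.
by move=> n i <-; apply: bnd; apply: horizon_limit_suffix.
Qed.

Lemma horizon_limit_owner_target u rho :
  horizon_limit u rho -> own u \in u.2 -> ele (cost (own u) rho) (Some 0).
Proof.
by move=> lim owned; apply/cost_leP; exists 0; rewrite // (horizon_limit_start lim) inE.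
Qed.

Lemma bounds_horizon_limits_lam0 : bounds_horizon_limits (lam0 owner).
Proof.
move=> u rho lim; rewrite ffunE; case: ifP => [owned|_]; last exact: ele_None.
exact: horizon_limit_owner_target.
Qed.

Lemma bounds_horizon_limits_update J lam n :
  bounds_horizon_limits lam -> bounds_horizon_limits (update owner E F J lam n).
Proof.
move=> bnd u rho lim; rewrite ffunE; case: ifP => _; last exact: bnd.
case: ifP => [owned|_]; first exact: horizon_limit_owner_target.
apply: (big_ind (fun y => ele (cost (own u) rho) (esucc y))); first exact: ele_None.
  by move=> x y; rewrite /emin; case: ifP.
move=> u' EXu'; apply: ele_esucc => c.
case/(horizon_limit_no_deviation lim EXu') => pi lim_pi ge_pi.
apply: ele_trans ge_pi (esup_ub _).
by exists pi; split=> //; apply: horizon_limit_consistent.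
Qed.

Lemma bounds_horizon_limits_lamk J k : bounds_horizon_limits (lamk owner E F J k).
Proof.
rewrite /lamk; elim: k => [|k IH] /=; first exact: bounds_horizon_limits_lam0.
by case: (lamseq owner E F J k) IH => lam n /= ?; apply: bounds_horizon_limits_update.
Qed.

End HorizonPlays.

Theorem corollary2p12 (Pi V : finType) (owner : V -> Pi) (E : rel V)
  (F : Pi -> {set V}) (v0 : V) (J : seq {set Pi})
  (hV : 2 <= #|V|) (hPi : #|Pi| <= #|V|)
  (hsucc : forall v, exists v', E v v')
  (hJ : valid_order E F v0 J) :
  forall (k : nat) (v : VX Pi V) (i : Pi),
    exists rho, Lam owner E F (lamk owner E F J k) v rho /\
      cost i rho = esup (fun c => exists rho',
                            Lam owner E F (lamk owner E F J k) v rho' /\ c = cost i rho').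
Proof.
move=> k v i; apply: Lam_sup_attained.
have [rho lim] := horizon_limit_exists owner E F v.
exists rho; apply: (horizon_limit_consistent hsucc _ lim).
exact: bounds_horizon_limits_lamk.
Qed.
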